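(* For every positive integer $M$ there exists a temporal DAG whose underlying digraph is a transitive tournament, in which every temporal antichain has size at most $1$, but every temporal path cover and every temporally disjoint path cover has size at least $M$. In particular, temporal DAGs satisfy neither the Dilworth property nor the TD-Dilworth property, and the ratio between the minimum size of a temporal (disjoint) path cover and the maximum size of a temporal antichain is unbounded.
   Context: A temporal digraph is a pair $\mathcal D=(D,\lambda)$, where $D=(V,A)$ is a finite digraph (the underlying digraph) and $\lambda:A\to 2^{\{1,\dots,t_{\max}\}}$ assigns to each arc the set of time-steps (labels) at which it is active. A temporal DAG is a temporal digraph whose underlying digraph is acyclic. A temporal path is a sequence $(v_1,v_2,t_1),\dots,(v_{k-1},v_k,t_{k-1})$ with $v_1,\dots,v_k$ pairwise distinct, $\overrightarrow{v_iv_{i+1}}\in A$, $t_i\in\lambda(\overrightarrow{v_iv_{i+1}})$, and $t_1<\dots<t_{k-1}$; a single vertex is also a temporal path. It goes from $v_1$ to $v_k$. A path occupies $v_i$ ($1<i<k$) at every time in $\{t_{i-1},\dots,t_i\}$, $v_1$ at time $t_1$ and $v_k$ at time $t_{k-1}$; two temporal paths are temporally disjoint if they never occupy the same vertex at the same time. A temporal path cover is a collection of temporal paths whose vertex sets cover $V$; a temporally disjoint path cover is one whose paths are pairwise temporally disjoint. Two vertices are temporally connected if there is a temporal path from one to the other. A temporal antichain is a set of pairwise not temporally connected vertices. A class of temporal digraphs has the Dilworth property (resp. TD-Dilworth property) if for each member the minimum size of a temporal path cover (resp. temporally disjoint path cover) equals the maximum size of a temporal antichain. *)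

From mathcomp Require Import all_boot.
Set Implicit Arguments. Unset Strict Implicit. Unset Printing Implicit Defensive.

(* A temporal digraph on a finite vertex type V: tarc relation, maximal time
   tmax, and labels tlam u v (time-steps at which tarc u->v is active). *)
Record tdigraph (V : finType) := TDigraph {
  tarc  : rel V;
  tmax : nat;
  tlam  : V -> V -> seq nat }.

Definition tdigraph_wf (V : finType) (D : tdigraph V) : Prop :=
  forall u v t, t \in tlam D u v -> [/\ tarc D u v, 1 <= t & t <= tmax D].

Definition acyclic (V : finType) (e : rel V) : Prop :=
  forall x y, e x y -> ~~ connect e y x.

Definition transitive_tournament (V : finType) (e : rel V) : Prop :=
  [/\ forall x, ~~ e x x,
      forall x y, x != y -> (e x y (+) e y x) = true
    & forall x y z, e x y -> e y z -> e x z].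

(* A temporal path: vertices v_0..v_{k-1} (k >= 1) and times t_0..t_{k-2};
   step i is (v_i, v_{i+1}, t_i). *)
Record tpath (V : finType) := TPath { tverts : seq V; ttimes : seq nat }.

Definition is_tpath (V : finType) (D : tdigraph V) (P : tpath V) : Prop :=
  [/\ size (tverts P) = (size (ttimes P)).+1,
      uniq (tverts P),
      forall (i : nat) (x : V), i < size (ttimes P) ->
        let u := nth x (tverts P) i in
        let w := nth x (tverts P) i.+1 in
        tarc D u w /\ nth 0 (ttimes P) i \in tlam D u w
    & sorted ltn (ttimes P)].

Definition tp_first (V : finType) (P : tpath V) (x : V) := head x (tverts P).
Definition tp_last  (V : finType) (P : tpath V) (x : V) := last x (tverts P).

(* P occupies v at time t (0-indexed version of the paper's definition).
   A single-vertex path has no time steps and occupies nothing. *)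
Definition occupies (V : finType) (P : tpath V) (v : V) (t : nat) : Prop :=
  let vs := tverts P in let ts := ttimes P in let k := size vs in
  2 <= k /\
  ((v = nth v vs 0 /\ t = nth 0 ts 0) \/
   (v = nth v vs k.-1 /\ t = nth 0 ts k.-2) \/
   (exists i, [/\ 0 < i, i < k.-1, v = nth v vs i,
                  nth 0 ts i.-1 <= t & t <= nth 0 ts i])).

Definition temporally_disjoint (V : finType) (P Q : tpath V) : Prop :=
  ~ exists v t, occupies P v t /\ occupies Q v t.

Definition tpath_from_to (V : finType) (D : tdigraph V) (u v : V) : Prop :=
  exists P : tpath V, [/\ is_tpath D P, tp_first P u = u & tp_last P u = v].

Definition tconnected (V : finType) (D : tdigraph V) (u v : V) : Prop :=
  tpath_from_to D u v \/ tpath_from_to D v u.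

Definition temporal_antichain (V : finType) (D : tdigraph V) (S : {set V}) :=
  forall u v, u \in S -> v \in S -> u != v -> ~ tconnected D u v.

(* list membership (no decidable equality on paths needed) *)
Fixpoint inseq (T : Type) (x : T) (s : seq T) : Prop :=
  if s is y :: s' then y = x \/ inseq x s' else False.

Definition temporal_path_cover (V : finType) (D : tdigraph V)
  (C : seq (tpath V)) : Prop :=
  (forall P, inseq P C -> is_tpath D P) /\
  (forall v : V, exists2 P, inseq P C & v \in tverts P).

Definition td_path_cover (V : finType) (D : tdigraph V)
  (C : seq (tpath V)) : Prop :=
  temporal_path_cover D C /\
  (forall i j, i < size C -> j < size C -> i != j ->
     forall P0, temporally_disjoint (nth P0 C i) (nth P0 C j)).

(** Give every arc of the transitive tournament on [n] vertices the single
    time label 1. Since times along a temporal path increase strictly, every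
    temporal path uses at most one arc, so covering the [n] vertices takes at
    least [n / 2] paths; on the other hand each arc is itself a temporal path,
    so any two distinct vertices are temporally connected. *)
From mathcomp Require Import all_boot.

Section TemporalPaths.
Variables (V : finType) (D : tdigraph V).

Lemma tpath_from_to_arc u v t :
  u != v -> tarc D u v -> t \in tlam D u v -> tpath_from_to D u v.
Proof.
move=> neq_uv arc_uv t_uv; exists (TPath [:: u; v] [:: t]).
split=> //; split=> //=; first by rewrite inE andbT.
by case.
Qed.

Lemma antichain_card_le1 (S : {set V}) :
  (forall u v, u != v -> tarc D u v || tarc D v u) ->
  (forall u v, tarc D u v -> exists t, t \in tlam D u v) ->
  temporal_antichain D S -> #|S| <= 1.
Proof.
move=> arc_total arc_labelled antiS; rewrite leqNgt.
apply/card_gt1P => -[u [v [uS vS neq_uv]]].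
apply: (antiS u v uS vS neq_uv).
have /orP[arc_uv | arc_vu] := arc_total u v neq_uv.
- have [t t_uv] := arc_labelled u v arc_uv.
  by left; apply: tpath_from_to_arc t_uv.
- have [t t_vu] := arc_labelled v u arc_vu.
  by right; apply: tpath_from_to_arc t_vu; rewrite // eq_sym.
Qed.

Lemma tpath_single_time_size t0 (P : tpath V) :
  (forall u v t, t \in tlam D u v -> t = t0) ->
  is_tpath D P -> size (tverts P) <= 2.
Proof.
case: P => [[|x vs] ts] single_time [/= size_vs _ steps sorted_ts] //.
rewrite size_vs ltnS.
case: ts sorted_ts steps {size_vs} => [|a [|b ts]] //= /andP[lt_ab _] steps.
have [_ /single_time ta] := steps 0 x erefl.
have [_ /single_time tb] := steps 1 x erefl.
by rewrite /= in ta tb; rewrite ta tb ltnn in lt_ab.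
Qed.

Lemma mem_flatten_tverts (C : seq (tpath V)) P v :
  inseq P C -> v \in tverts P -> v \in flatten (map (@tverts V) C).
Proof.
elim: C => [|Q C IH] //= [<- | PC] vP; rewrite mem_cat ?vP //.
by rewrite IH ?orbT.
Qed.

Lemma size_flatten_tverts k (C : seq (tpath V)) :
  (forall P, inseq P C -> size (tverts P) <= k) ->
  size (flatten (map (@tverts V) C)) <= k * size C.
Proof.
elim: C => [|Q C IH] //= small; rewrite size_cat mulnS.
by apply: leq_add; [apply: small; left | apply: IH => P PC; apply: small; right].
Qed.

Lemma tpath_cover_size k (C : seq (tpath V)) :
  (forall P, is_tpath D P -> size (tverts P) <= k) ->
  temporal_path_cover D C -> #|V| <= k * size C.
Proof.
move=> small [paths covers].
apply: (leq_trans _ (@size_flatten_tverts k C (fun P PC => small P (paths P PC)))).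
apply: (leq_trans _ (card_size _)); apply: subset_leq_card; apply/subsetP => v _.
by have [P PC vP] := covers v; apply: mem_flatten_tverts vP.
Qed.

End TemporalPaths.

Definition single_time_tournament n : tdigraph 'I_n :=
  @TDigraph 'I_n (fun x y => x < y) 1 (fun x y => if x < y then [:: 1] else [::]).

Lemma single_time_tournament_wf n : tdigraph_wf (single_time_tournament n).
Proof. by move=> u v t /=; case: ifP => // lt_uv; rewrite inE => /eqP ->. Qed.

Lemma ord_ltn_acyclic n : acyclic (fun x y : 'I_n => x < y).
Proof.
move=> x y lt_xy; apply/negP => /connectP[p path_yp eq_x].
suff: y <= last y p by rewrite -eq_x leqNgt lt_xy.
elim: p y path_yp {eq_x lt_xy} => [|z p IH] y //= /andP[lt_yz /IH].
exact/leq_trans/ltnW.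
Qed.

Lemma ord_ltn_transitive_tournament n :
  transitive_tournament (fun x y : 'I_n => x < y).
Proof.
split=> [x | x y neq_xy | x y z]; [by rewrite ltnn | | exact: ltn_trans].
by case: ltngtP => // eq_xy; move: neq_xy; rewrite (val_inj eq_xy) eqxx.
Qed.

Theorem mainTheorem2 :
  forall M : nat, 0 < M ->
  exists (n : nat) (D : tdigraph 'I_n),
    [/\ tdigraph_wf D,
        acyclic (tarc D),
        transitive_tournament (tarc D),
        (forall S : {set 'I_n}, temporal_antichain D S -> #|S| <= 1)
      & (forall C, temporal_path_cover D C -> M <= size C) /\
        (forall C, td_path_cover D C -> M <= size C)].
Proof.
move=> M _; pose D := single_time_tournament (2 * M).
have path_small P : is_tpath D P -> size (tverts P) <= 2.
  apply: (@tpath_single_time_size _ D 1) => u v t /=.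
  by case: ifP => // _; rewrite inE => /eqP.
have cover_bound C : temporal_path_cover D C -> M <= size C.
  by move=> /(@tpath_cover_size _ D 2 C path_small); rewrite card_ord leq_pmul2l.
exists (2 * M), D; split.
- exact: single_time_tournament_wf.
- exact: ord_ltn_acyclic.
- exact: ord_ltn_transitive_tournament.
- move=> S; apply: antichain_card_le1 => [u v neq_uv | u v /= lt_uv].
  + by rewrite /= -neq_ltn val_eqE.
  + by exists 1; rewrite lt_uv inE.
- by split=> // C [/cover_bound].
Qed.
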